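(* Let $n$ be a positive integer divisible by $4$. Let $\mathcal{T}^*_n$ be the family of triangles on an $n$-element vertex set obtained as follows: choose $\frac{n}{4}$ pairwise disjoint pairs $\{u_i,w_i\}$ of vertices, let $R$ be the set of the remaining $\frac{n}{2}$ vertices, and let $\mathcal{T}^*_n=\{\{u_i,w_i,r\} : 1\le i\le \frac n4,\ r\in R\}$. Then $\mathcal{T}^*_n$ is a set of $\frac{n^2}{8}$ triangles with no rainbow triangle, and it is the unique such set up to isomorphism: every set of exactly $\frac{n^2}{8}$ distinct triangles on an $n$-element vertex set having no rainbow triangle is isomorphic to $\mathcal{T}^*_n$ (i.e., is the image of $\mathcal{T}^*_n$ under a bijection of the vertex sets).
   Context: A triangle on a vertex set $V$ is a $3$-element subset $\{x,y,z\}\subseteq V$, identified with its edge set $\{\{x,y\},\{y,z\},\{x,z\}\}$. For a family $\mathcal{T}$ of triangles, a rainbow triangle is a triangle $\{x,y,z\}$ on $V$ together with three distinct members $t_1,t_2,t_3$ of $\mathcal{T}$ such that $\{x,y\}$ is an edge of $t_1$, $\{y,z\}$ is an edge of $t_2$ and $\{x,z\}$ is an edge of $t_3$. *)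

From mathcomp Require Import all_boot.
Set Implicit Arguments. Unset Strict Implicit. Unset Printing Implicit Defensive.

Definition triangle_family (V : finType) (F : {set {set V}}) : Prop :=
  forall t, t \in F -> #|t| = 3.

Definition has_rainbow (V : finType) (F : {set {set V}}) : Prop :=
  exists x y z : V, [/\ x != y, y != z & x != z] /\
  exists t1 t2 t3 : {set V},
    [/\ t1 \in F, t2 \in F & t3 \in F] /\
    [/\ t1 != t2, t2 != t3 & t1 != t3] /\
    [/\ [set x; y] \subset t1, [set y; z] \subset t2 & [set x; z] \subset t3].

(* The extremal family T*_n on the vertex set 'I_n, with the concrete choice
   u_i = 2i, w_i = 2i+1 (0 <= i < n/4) and R = {v | n/2 <= v < n}. *)
Definition Tstar (n : nat) : {set {set 'I_n}} :=
  [set t : {set 'I_n} | [exists i : 'I_n, exists r : 'I_n,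
     [&& 4 * i < n, n <= 2 * r &
         t == [set v : 'I_n | [|| nat_of_ord v == 2 * i,
                                 nat_of_ord v == 2 * i + 1 |
                                 nat_of_ord v == nat_of_ord r]]]]].

From mathcomp Require Import all_boot zify.
Set Implicit Arguments. Unset Strict Implicit. Unset Printing Implicit Defensive.

(* In a family F without rainbow triangle, every member t has at most one pair of vertices
   that also lies in another member, so t has an apex z such that both pairs {z, x} of t
   through z belong to no other member.  These pairs, over all t, are 2|F| distinct edges of a
   graph without triangles (a triangle of it would be rainbow).  For |F| = n^2/8 this is the
   extremal number n^2/4 of Mantel's theorem, so the graph is complete bipartite with sides of
   size n/2.  Each triangle then has its apex on one side and its base on the other; all apices
   lie on the same side, every base extended by any vertex of that side is again in F, and the
   bases are disjoint.  Hence F consists of the n/4 bases of a matching, each joined to each of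
   the n/2 vertices of the apex side, which is T*_n up to relabelling. *)

Lemma big_setC_split (I : finType) (A : {set I}) (F : I -> nat) :
  \sum_i F i = \sum_(i in A) F i + \sum_(i in ~: A) F i.
Proof. by rewrite (bigID [in A]); congr (_ + _); apply: eq_bigl => i; rewrite inE. Qed.

Lemma sum_nat_of_bool (I : finType) (P : pred I) : \sum_i (P i : nat) = #|[set i | P i]|.
Proof. by rewrite -sum1dep_card [RHS]big_mkcond; apply: eq_bigr => i _; case: (P i). Qed.

Lemma sum_nat_of_bool_eq_card (I : finType) (A : {set I}) (P : pred I) :
  \sum_(i in A) (P i : nat) = #|A| -> {in A, forall i, P i}.
Proof.
rewrite -sum1_card => /eqP.
have leP i : i \in A -> (P i : nat) <= 1 ?= iff P i by case: (P i).
by rewrite (leqif_sum leP) => /forall_inP.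
Qed.

Section MantelExtremal.
Variables (V : finType) (adj : rel V).
Hypothesis adj_sym : symmetric adj.
Hypothesis adj_triangle_free : forall x y z, adj x y -> adj y z -> adj x z -> False.

Definition deg_in (A : {set V}) x := \sum_(y in A) (adj x y : nat).
Definition deg x := \sum_y (adj x y : nat).

Lemma deg_split A x : deg x = deg_in A x + deg_in (~: A) x.
Proof. exact: big_setC_split. Qed.

Lemma deg_in_le_card A x : deg_in A x <= #|A|.
Proof. by rewrite -sum1_card leq_sum // => y _; apply: leq_b1. Qed.

Section Neighbourhood.
Variable v : V.
Let A := [set y | adj v y].

Lemma card_neighbourhood : #|A| = deg v.
Proof. by rewrite /deg sum_nat_of_bool. Qed.

Lemma neighbourhood_indep x y : x \in A -> y \in A -> ~~ adj x y.
Proof. by rewrite !inE => vx vy; apply/negP => xy; apply: (adj_triangle_free vx xy vy). Qed.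

Lemma sum_deg_neighbourhood :
  \sum_x deg x = \sum_(y in ~: A) (2 * deg_in A y + deg_in (~: A) y).
Proof.
have deg_A x : x \in A -> deg x = deg_in (~: A) x.
  move=> xA; rewrite (deg_split A) -[RHS]add0n; congr (_ + _).
  by apply: big1 => y yA; rewrite (negbTE (neighbourhood_indep xA yA)).
rewrite (big_setC_split A) (eq_bigr _ deg_A) exchange_big -big_split /=.
apply: eq_bigr => y _; rewrite (deg_split A) mul2n -addnn -addnA; congr (_ + _).
by apply: eq_bigr => x _; rewrite adj_sym.
Qed.

Lemma deg_neighbourhood_le y : (forall x, deg x <= deg v) ->
  2 * deg_in A y + deg_in (~: A) y <= 2 * deg v.
Proof.
move=> deg_max; have := deg_in_le_card A y; have := deg_max y.
by rewrite card_neighbourhood (deg_split A); lia.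
Qed.

End Neighbourhood.

(* For v of maximum degree, its neighbourhood A is independent, and counting from ~: A gives
   sum deg <= 2 |~: A| deg v <= (|~: A| + deg v)^2 / 2 = 2 m^2.  Equality forces
   |~: A| = deg v = m, and every vertex outside A to be adjacent to exactly the vertices of A. *)
Lemma mantel_extremal m : #|V| = 2 * m -> \sum_x deg x = 2 * m ^ 2 ->
  exists A : {set V}, #|A| = m /\ forall x y, adj x y = ((x \in A) != (y \in A)).
Proof.
move=> cardV edges.
have [v0 _ | V0] := pickP (fun _ : V => true); last first.
  by exists set0; split=> [|x]; [move: cardV; rewrite cards0 (eq_card0 V0); lia | have := V0 x].
have [v _ deg_max'] := @arg_maxnP V v0 predT deg isT.
have deg_max y : deg y <= deg v by apply: deg_max'.
set A := [set y | adj v y].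
have cardA : #|A| = deg v := card_neighbourhood v.
have cardAB : #|~: A| + deg v = 2 * m by rewrite -cardV -cardA addnC cardsC.
have [AGM AGM_eq] := nat_AGM2 #|~: A| (deg v).
have le_B : \sum_x deg x <= #|~: A| * (2 * deg v).
  rewrite (sum_deg_neighbourhood v) -sum_nat_const leq_sum // => y _.
  exact: deg_neighbourhood_le.
have cardB : #|~: A| = deg v by apply/eqP; rewrite -AGM_eq cardAB; move: AGM; rewrite cardAB; nia.
have eq_B y : y \in ~: A -> 2 * deg_in A y + deg_in (~: A) y = 2 * deg v.
  have [_] := leqif_sum (fun y' (_ : y' \in ~: A) => leqif_eq (deg_neighbourhood_le y' deg_max)).
  rewrite -(sum_deg_neighbourhood v) sum_nat_const edges cardB.
  have -> : 2 * m ^ 2 == deg v * (2 * deg v) by apply/eqP; lia.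
  by move=> /esym/forall_inP all_eq yB; apply/eqP/all_eq.
have cross y : y \notin A -> {in A, forall x, adj y x} /\ {in ~: A, forall x, ~~ adj y x}.
  rewrite -in_setC => yB; have := eq_B y yB; have := deg_max y; have := deg_in_le_card A y.
  rewrite (deg_split A) cardA => le_A le_deg eq_y.
  have dA : deg_in A y = #|A| by lia.
  have /eqP : deg_in (~: A) y = 0 by lia.
  rewrite sum_nat_eq0 => /forall_inP B0; split; first exact: sum_nat_of_bool_eq_card dA.
  by move=> x xB; have := B0 x xB; case: adj.
exists A; split=> [|x y]; first lia.
case xA: (x \in A); case yA: (y \in A) => /=.
- exact/negbTE/(neighbourhood_indep xA yA).
- by rewrite adj_sym (cross y (negbT yA)).1.
- by rewrite (cross x (negbT xA)).1.
- by apply/negbTE/(cross x (negbT xA)).2; rewrite inE yA.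
Qed.

End MantelExtremal.

Section Triangles.
Variable V : finType.
Implicit Types (t : {set V}) (a c x z : V).

Lemma card_set3 a c z : a != c -> a != z -> c != z -> #|z |: [set a; c]| = 3.
Proof. by move=> ac az cz; rewrite cardsU1 cards2 !inE ac negb_or !(eq_sym z) az cz. Qed.

Lemma triangle_eq t a c z : #|t| = 3 -> a \in t -> c \in t -> z \in t ->
  a != c -> a != z -> c != z -> t = z |: [set a; c].
Proof.
move=> card_t at_ ct zt ac az cz; apply/esym/eqP.
by rewrite eqEcard card_set3 // card_t leqnn andbT subUset !sub1set zt subUset !sub1set at_ ct.
Qed.

Lemma triangle_through t z : #|t| = 3 -> z \in t ->
  exists a c, [/\ a != c, a != z, c != z & t = z |: [set a; c]].
Proof.
move=> card_t zt; have /cards2P[a [c [ac tz]]] : #|t :\ z| == 2.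
  by move: card_t; rewrite (cardsD1 z) zt add1n => -[->].
have : a \in t :\ z /\ c \in t :\ z by rewrite tz !inE !eqxx orbT.
by rewrite !inE => -[/andP[az _] /andP[cz _]]; exists a, c; rewrite -tz setD1K.
Qed.

Lemma mem_set3 x a c z : x \in z |: [set a; c] -> [\/ x = z, x = a | x = c].
Proof. by rewrite !inE => /or3P[] /eqP->; [constructor 1 | constructor 2 | constructor 3]. Qed.

End Triangles.

Lemma has_rainbowI (V : finType) (F : {set {set V}}) x y z t1 t2 t3 :
  x != y -> y != z -> x != z ->
  t1 \in F -> t2 \in F -> t3 \in F -> t1 != t2 -> t2 != t3 -> t1 != t3 ->
  x \in t1 -> y \in t1 -> y \in t2 -> z \in t2 -> x \in t3 -> z \in t3 -> has_rainbow F.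
Proof.
move=> xy yz xz t1F t2F t3F d12 d23 d13 x1 y1 y2 z2 x3 z3.
exists x, y, z; split => //; exists t1, t2, t3; split => //; split => //.
by split; rewrite subUset !sub1set ?x1 ?y1 ?y2 ?z2 ?x3 ?z3.
Qed.

Definition matching_outside (V : finType) (M : {set {set V}}) (R : {set V}) : Prop :=
  [/\ forall e, e \in M -> #|e| = 2,
      forall e x, e \in M -> x \in e -> x \notin R &
      forall e e' x, e \in M -> e' \in M -> x \in e -> x \in e' -> e = e'].

Definition cone_family (V : finType) (M : {set {set V}}) (R : {set V}) : {set {set V}} :=
  [set r |: e | e in M, r in R].

Lemma cone_familyP (V : finType) (M : {set {set V}}) (R : {set V}) t :
  reflect (exists2 e, e \in M & exists2 r, r \in R & t = r |: e) (t \in cone_family M R).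
Proof.
apply: (iffP imset2P) => [[e r eM rR ->] | [e eM [r rR ->]]]; last by exists e r.
by exists e => //; exists r.
Qed.

Lemma imset_cone_family (T V : finType) (f : T -> V) (M : {set {set T}}) (R : {set T}) :
  [set f @: t | t : {set T} in cone_family M R] =
  cone_family [set f @: e | e : {set T} in M] (f @: R).
Proof.
apply/setP => t; apply/imsetP/cone_familyP.
  move=> [_ /cone_familyP[e eM [r rR ->]] ->].
  by exists (f @: e); [exact: imset_f | exists (f r); [exact: imset_f | exact: imsetU1]].
move=> [_ /imsetP[e eM ->] [_ /imsetP[r rR ->] ->]].
by exists (r |: e); [apply/cone_familyP; exists e => //; exists r | rewrite imsetU1].
Qed.

Section Tstar.
Variable n : nat.

Definition Tstar_pair (i : nat) : {set 'I_n} :=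
  [set v : 'I_n | (nat_of_ord v == 2 * i) || (nat_of_ord v == 2 * i + 1)].
Definition Tstar_matching : {set {set 'I_n}} := [set Tstar_pair i | i : 'I_n & 4 * i < n].
Definition Tstar_rest : {set 'I_n} := [set v : 'I_n | n <= 2 * v].

Lemma Tstar_cone : Tstar n = cone_family Tstar_matching Tstar_rest.
Proof.
apply/setP => t; rewrite inE; apply/existsP/cone_familyP.
  move=> [i /existsP[r /and3P[lt_i le_r /eqP->]]].
  exists (Tstar_pair i); first by rewrite imset_f ?inE.
  by exists r; rewrite ?inE //; apply/setP => v; rewrite !inE [RHS]orbC -orbA.
move=> [e /imsetP[i]]; rewrite inE => lt_i -> [r]; rewrite inE => le_r ->.
exists i; apply/existsP; exists r; rewrite lt_i le_r /=.
by apply/eqP/setP => v; rewrite !inE orbC -orbA.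
Qed.

Lemma card_ord_lt m : m <= n -> #|[set v : 'I_n | v < m]| = m.
Proof.
move=> le_mn; have widen_inj : injective (widen_ord le_mn) by move=> a b /(congr1 val) /= /val_inj.
rewrite -[RHS]card_ord -(card_imset _ widen_inj).
apply: eq_card => v; rewrite inE; apply/idP/imsetP => [lt_vm | [j _ ->] /=].
  by exists (Ordinal lt_vm) => //; apply/val_inj.
exact: ltn_ord.
Qed.

Variable k : nat.
Hypothesis n4k : n = 4 * k.

Lemma Tstar_matching_outside : matching_outside Tstar_matching Tstar_rest.
Proof.
split.
- move=> e /imsetP[i]; rewrite inE => lt_i ->.
  have lt1 : 2 * i < n by lia.
  have lt2 : 2 * i + 1 < n by lia.
  have -> : Tstar_pair i = [set Ordinal lt1; Ordinal lt2].
    by apply/setP => v; rewrite !inE -!val_eqE.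
  by rewrite cards2 -val_eqE /=; case: eqP => //; lia.
- move=> e x /imsetP[i]; rewrite inE => lt_i ->; rewrite !inE -ltnNge.
  by case/orP => /eqP->; lia.
- move=> e e' x /imsetP[i _ ->] /imsetP[j _ ->]; rewrite !inE => xi xj.
  by congr Tstar_pair; case/orP: xi => /eqP xi; case/orP: xj => /eqP xj; lia.
Qed.

Lemma card_Tstar_rest : #|Tstar_rest| = 2 * k.
Proof.
have -> : Tstar_rest = ~: [set v : 'I_n | v < 2 * k].
  by apply/setP => v; rewrite !inE -leqNgt; apply/idP/idP; lia.
by rewrite cardsCs setCK card_ord_lt ?cardsT ?card_ord; lia.
Qed.

Lemma card_Tstar_matching : #|Tstar_matching| = k.
Proof.
rewrite card_in_imset => [|i j]; last first.
  rewrite !inE => lt_i lt_j eq_ij.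
  have lt2i : 2 * i < n by lia.
  have : Ordinal lt2i \in Tstar_pair j by rewrite -eq_ij inE eqxx.
  by rewrite inE /= => /orP[] /eqP ij; apply/val_inj => /=; lia.
have -> : [set i : 'I_n | 4 * i < n] = [set v : 'I_n | v < k].
  by apply/setP => v; rewrite !inE; apply/idP/idP; lia.
by rewrite card_ord_lt; lia.
Qed.

End Tstar.

Lemma enum_card2 (V : finType) (e : {set V}) : #|e| = 2 -> exists a b, a != b /\ enum e = [:: a; b].
Proof.
rewrite cardE; have := enum_uniq (mem e).
by case: (enum e) => [|a [|b [|c s]]] //= /andP[]; rewrite inE => ab _ _; exists a, b.
Qed.

Section Matching.
Variables (V : finType) (M : {set {set V}}) (R : {set V}).
Hypothesis matchM : matching_outside M R.

Let card_edge e : e \in M -> #|e| = 2.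
Proof. by case: matchM => h _ _; apply: h. Qed.

Let edge_offR e x : e \in M -> x \in e -> x \notin R.
Proof. by case: matchM => _ h _; apply: h. Qed.

Let edge_inj e e' x : e \in M -> e' \in M -> x \in e -> x \in e' -> e = e'.
Proof. by case: matchM => _ _ h; apply: h. Qed.

Lemma rest_notin_edge e r : e \in M -> r \in R -> r \notin e.
Proof. by move=> eM rR; apply: contraL rR; apply: edge_offR. Qed.

Lemma cone_family_triangles : triangle_family (cone_family M R).
Proof.
by move=> t /cone_familyP[e eM [r rR ->]]; rewrite cardsU1 rest_notin_edge ?card_edge.
Qed.

Lemma card_cone_family : #|cone_family M R| = #|M| * #|R|.
Proof.
rewrite /cone_family curry_imset2X card_in_imset ?cardsX // => -[e r] [e' r'] /=.
rewrite !inE /= => /andP[eM rR] /andP[e'M r'R] eq_t.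
have rr' : r = r'.
  have : r \in r' |: e' by rewrite -eq_t setU11.
  by rewrite in_setU1 => /orP[/eqP // | re']; move: (edge_offR e'M re'); rewrite rR.
subst r'; congr (_, _).
by rewrite -(setU1K (rest_notin_edge eM rR)) eq_t setU1K // rest_notin_edge.
Qed.

Lemma cone_memR t u v : t \in cone_family M R -> u \in t -> u \in R -> v \in t -> v != u ->
  v \notin R /\ exists2 e, e \in M & v \in e /\ t = u |: e.
Proof.
move=> /cone_familyP[e eM [r rR ->]]; rewrite !in_setU1.
case/orP=> [/eqP-> _ | ue]; last by rewrite (negbTE (edge_offR eM ue)).
by rewrite orbC => /orP[ve _ | /eqP->]; [split; [exact: edge_offR ve | exists e] | rewrite eqxx].
Qed.

Lemma cone_mem_offR t u v : t \in cone_family M R -> u \in t -> v \in t ->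
  u \notin R -> v \notin R -> exists2 e, e \in M & u \in e /\ v \in e.
Proof.
move=> /cone_familyP[e eM [r rR ->]]; rewrite !in_setU1.
by case/orP=> [/eqP-> | ue]; case/orP=> [/eqP-> | ve]; rewrite ?rR //; exists e.
Qed.

Lemma cone_eq_atR u v w s1 s2 s3 :
  s1 \in cone_family M R -> s2 \in cone_family M R -> s3 \in cone_family M R ->
  u \in R -> v != u -> w != u -> u \in s1 -> v \in s1 -> u \in s2 -> w \in s2 ->
  v \in s3 -> w \in s3 -> s1 = s2.
Proof.
move=> s1F s2F s3F uR vu wu us1 vs1 us2 ws2 vs3 ws3.
have [vR [e1 e1M [ve1 ->]]] := cone_memR s1F us1 uR vs1 vu.
have [wR [e2 e2M [we2 ->]]] := cone_memR s2F us2 uR ws2 wu.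
have [e3 e3M [ve3 we3]] := cone_mem_offR s3F vs3 ws3 vR wR.
by rewrite (edge_inj e1M e3M ve1 ve3) (edge_inj e2M e3M we2 we3).
Qed.

Lemma cone_family_no_rainbow : ~ has_rainbow (cone_family M R).
Proof.
move=> [x [y [z [[xy yz xz] [t1 [t2 [t3 [[t1F t2F t3F] [[d12 d23 d13] []]]]]]]]]].
rewrite !subUset !sub1set => /andP[xt1 yt1] /andP[yt2 zt2] /andP[xt3 zt3].
have [xR | xR] := boolP (x \in R).
  by case/eqP: d13; apply: (cone_eq_atR t1F t3F t2F xR _ _ xt1 yt1 xt3 zt3); rewrite // eq_sym.
have [yR | yR] := boolP (y \in R).
  by case/eqP: d12; apply: (cone_eq_atR t1F t2F t3F yR _ _ yt1 xt1 yt2 zt2); rewrite // eq_sym.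
have [zR | zR] := boolP (z \in R).
  by case/eqP: d23; apply: (cone_eq_atR t2F t3F t1F zR _ _ zt2 yt2 zt3 xt3).
have [e1 e1M [xe1 ye1]] := cone_mem_offR t1F xt1 yt1 xR yR.
have [e2 e2M [ye2 ze2]] := cone_mem_offR t2F yt2 zt2 yR zR.
rewrite -(edge_inj e1M e2M ye1 ye2) in ze2.
have : #|z |: [set x; y]| <= #|e1| by rewrite subset_leq_card // !subUset !sub1set ze2 xe1 ye1.
by rewrite card_set3 // card_edge.
Qed.

Section Relabel.
Variables (n k : nat) (x0 : V).
Hypotheses (n4k : n = 4 * k) (cardV : #|V| = n) (cardM : #|M| = k) (cardR : #|R| = 2 * k).

Definition relabel (i : 'I_n) : V :=
  if i < 2 * k then nth x0 (enum (nth set0 (enum M) i./2)) (odd i)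
  else nth x0 (enum R) (i - 2 * k).

Lemma nth_enum_M i : i < k -> nth set0 (enum M) i \in M.
Proof. by move=> lt_ik; rewrite -mem_enum mem_nth // -cardE cardM. Qed.

Lemma relabel_low (i : 'I_n) : i < 2 * k -> relabel i \in nth set0 (enum M) i./2.
Proof.
move=> lt_i; rewrite /relabel lt_i -mem_enum mem_nth // -cardE card_edge.
  by case: (odd i).
by apply: nth_enum_M; rewrite -ltn_double -!mul2n; have := odd_double_half i; lia.
Qed.

Lemma relabel_high (i : 'I_n) : 2 * k <= i -> relabel i \in R.
Proof.
move=> le_i; rewrite /relabel ltnNge le_i /= -mem_enum mem_nth // -cardE cardR.
by have := ltn_ord i; lia.
Qed.

Lemma relabel_inj : injective relabel.
Proof.
move=> i j eq_ij; apply/val_inj => /=.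
have := odd_double_half i; have := odd_double_half j => hj hi.
have [lt_i | le_i] := ltnP i (2 * k); have [lt_j | le_j] := ltnP j (2 * k).
- have ik : i./2 < k by lia.
  have jk : j./2 < k by lia.
  have := relabel_low lt_j; rewrite -eq_ij => ij.
  have /eqP := edge_inj (nth_enum_M ik) (nth_enum_M jk) (relabel_low lt_i) ij.
  rewrite nth_uniq ?enum_uniq -?cardE ?cardM // => /eqP half_ij.
  move: eq_ij; rewrite /relabel lt_i lt_j half_ij => /eqP.
  rewrite nth_uniq ?enum_uniq -?cardE ?card_edge ?nth_enum_M -?half_ij //; last 2 first.
  + by case: (odd i).
  + by case: (odd j).
  by move=> /eqP; lia.
- have ik : i./2 < k by lia.
  by have := edge_offR (nth_enum_M ik) (relabel_low lt_i); rewrite eq_ij (relabel_high le_j).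
- have jk : j./2 < k by lia.
  by have := edge_offR (nth_enum_M jk) (relabel_low lt_j); rewrite -eq_ij (relabel_high le_i).
- move: eq_ij; rewrite /relabel ltnNge le_i ltnNge le_j /= => /eqP.
  have := ltn_ord i; have := ltn_ord j => ltj lti.
  by rewrite nth_uniq ?enum_uniq -?cardE ?cardR; [move/eqP | ..]; lia.
Qed.

Lemma relabel_bij : bijective relabel.
Proof. by apply: inj_card_bij relabel_inj _; rewrite card_ord cardV. Qed.

Lemma relabel_rest : relabel @: Tstar_rest n = R.
Proof.
apply/setP => x; apply/imsetP/idP => [[v] | xR].
  by rewrite inE => le_v ->; apply: relabel_high; lia.
have lt_x : index x (enum R) < 2 * k by rewrite -cardR cardE index_mem mem_enum.
have lt_n : 2 * k + index x (enum R) < n by lia.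
exists (Ordinal lt_n); first by rewrite inE /=; lia.
by rewrite /relabel /= ltnNge leq_addr /= addKn nth_index // mem_enum.
Qed.

Lemma relabel_pair i : i < k -> relabel @: Tstar_pair n i = nth set0 (enum M) i.
Proof.
move=> lt_ik; have [a [b [ab enum_e]]] := enum_card2 (card_edge (nth_enum_M lt_ik)).
have lt1 : 2 * i < n by lia.
have lt2 : 2 * i + 1 < n by lia.
have relabel1 : relabel (Ordinal lt1) = a.
  by rewrite /relabel /= ifT ?oddM ?mul2n ?doubleK ?enum_e //; lia.
have relabel2 : relabel (Ordinal lt2) = b.
  rewrite /relabel /= ifT; last by lia.
  by rewrite addn1 mul2n oddS odd_double -uphalfE uphalf_double enum_e.
have -> : Tstar_pair n i = [set Ordinal lt1; Ordinal lt2].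
  by apply/setP => v; rewrite !inE -!val_eqE.
rewrite imsetU1 imset_set1 relabel1 relabel2; apply/setP => y.
by rewrite -[in RHS]mem_enum enum_e !inE.
Qed.

Lemma relabel_matching : [set relabel @: e | e : {set 'I_n} in Tstar_matching n] = M.
Proof.
apply/setP => e; apply/imsetP/idP => [[e0 /imsetP[i]] | eM].
  by rewrite inE => lt_i -> ->; rewrite relabel_pair; [apply: nth_enum_M | ]; lia.
have lt_e : index e (enum M) < k by rewrite -cardM cardE index_mem mem_enum.
have lt_n : index e (enum M) < n by lia.
exists (Tstar_pair n (Ordinal lt_n)).
  by apply/imsetP; exists (Ordinal lt_n); rewrite // inE /= n4k ltn_pmul2l.
by rewrite relabel_pair // nth_index // mem_enum.
Qed.

End Relabel.

End Matching.

Lemma sum_pairs_through (V : finType) (t : {set V}) z : z \in t ->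
  \sum_x \sum_y ([&& x != y, x \in t, y \in t & (z == x) || (z == y)] : nat) = 2 * #|t :\ z|.
Proof.
move=> zt; rewrite pair_big /= (sum_nat_of_bool (fun p : V * V => _)).
have -> : [set p : V * V | [&& p.1 != p.2, p.1 \in t, p.2 \in t & (z == p.1) || (z == p.2)]]
          = setX [set z] (t :\ z) :|: setX (t :\ z) [set z].
  apply/setP => -[x y]; rewrite !inE /=.
  case: (eqVneq z x) => [<-|zx]; case: (eqVneq z y) => [<-|zy];
    by rewrite ?eqxx ?zt ?andbF ?orbF ?andbT //= 1?eq_sym ?zx ?zy.
rewrite cardsU !cardsX cards1 mul1n muln1.
have -> : setX [set z] (t :\ z) :&: setX (t :\ z) [set z] = set0.
  by apply/setP => -[x y]; rewrite !inE /=; case: (x == z); rewrite ?andbF.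
by rewrite cards0 subn0 addnn mul2n.
Qed.

Definition private_pair (V : finType) (F : {set {set V}}) (t : {set V}) (x y : V) : bool :=
  [forall t' in F, (x \in t') && (y \in t') ==> (t' == t)].

Definition is_apex (V : finType) (F : {set {set V}}) (t : {set V}) (z : V) : bool :=
  [forall x in t, (x != z) ==> private_pair F t z x].

Section NoRainbow.
Variables (V : finType) (F : {set {set V}}) (x0 : V).
Hypothesis triF : triangle_family F.
Hypothesis no_rainbow : ~ has_rainbow F.

Lemma private_pairP t x y t' :
  private_pair F t x y -> t' \in F -> x \in t' -> y \in t' -> t' = t.
Proof. by move=> /forall_inP priv t'F xt yt; apply/eqP/(implyP (priv t' t'F)); rewrite xt. Qed.

Lemma private_pairC t x y : private_pair F t x y = private_pair F t y x.
Proof. by apply: eq_forallb_in => t' _; rewrite andbC. Qed.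

Lemma private_pairPn t x y :
  ~~ private_pair F t x y -> exists2 t', t' \in F & [/\ x \in t', y \in t' & t' != t].
Proof. by case/forall_inPn => t' t'F; rewrite negb_imply => /andP[/andP[xt yt] t't]; exists t'. Qed.

(* Two non-private pairs sharing the vertex a, together with t, would form a rainbow triangle. *)
Lemma private_pair_at t a b c : t \in F -> a \in t -> b \in t -> c \in t ->
  a != b -> a != c -> b != c -> private_pair F t a b || private_pair F t a c.
Proof.
move=> tF at_ bt ct ab ac bc; apply/negPn/negP; rewrite negb_or.
case/andP => /private_pairPn[t1 t1F [a1 b1 t1t]] /private_pairPn[t2 t2F [a2 c2 t2t]].
apply: no_rainbow; apply: (@has_rainbowI _ _ b a c t1 t2 t) => //; first by rewrite eq_sym.
apply: contraNneq t1t => t12; rewrite -t12 in c2.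
by rewrite (triangle_eq (triF tF) bt ct at_) 1?(triangle_eq (triF t1F) b1 c2 a1) // eq_sym.
Qed.

Lemma exists_apex t : t \in F -> exists2 z, z \in t & is_apex F t z.
Proof.
move=> tF; have card_t := triF tF.
have [a at_] : exists a, a \in t by apply/card_gt0P; rewrite card_t.
have [b [c [bc ba ca t_a]]] := triangle_through card_t at_.
have bt : b \in t by rewrite t_a !inE eqxx orbT.
have ct : c \in t by rewrite t_a !inE eqxx !orbT.
have ab : a != b by rewrite eq_sym.
have ac : a != c by rewrite eq_sym.
have cb : c != b by rewrite eq_sym.
have apexI z x y : t = z |: [set x; y] -> private_pair F t z x -> private_pair F t z y ->
    exists2 z', z' \in t & is_apex F t z'.
  move=> t_z zx zy; exists z; first by rewrite t_z setU11.
  by apply/forall_inP => w; rewrite {1}t_z => /mem_set3[] ->; rewrite ?eqxx ?zx ?zy ?implybT.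
have [pbc | npbc] := boolP (private_pair F t b c).
  have [pab | npab] := boolP (private_pair F t a b).
    by apply: (apexI b a c); [exact: triangle_eq | rewrite private_pairC |].
  have := private_pair_at tF at_ bt ct ab ac bc; rewrite (negbTE npab) /= => pac.
  by apply: (apexI c a b); [exact: triangle_eq | rewrite private_pairC | rewrite private_pairC].
have := private_pair_at tF bt at_ ct ba bc ac; rewrite (negbTE npbc) orbF => pba.
have := private_pair_at tF ct at_ bt ca cb ab.
rewrite [X in _ || X]private_pairC (negbTE npbc) orbF => pca.
by apply: (apexI a b c); rewrite // private_pairC.
Qed.

Definition apex (t : {set V}) : V := odflt x0 [pick z in t | is_apex F t z].

Lemma apexP t : t \in F -> apex t \in t /\ is_apex F t (apex t).
Proof.
move=> tF; rewrite /apex; case: pickP => [z /andP[] // | no_apex].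
by have [z zt z_apex] := exists_apex tF; move: (no_apex z); rewrite zt z_apex.
Qed.

Lemma apex_in t : t \in F -> apex t \in t.
Proof. by case/apexP. Qed.

Lemma apex_private t x : t \in F -> x \in t -> x != apex t -> private_pair F t (apex t) x.
Proof. by move=> /apexP[_ /forall_inP apex_t] xt; apply/implyP/apex_t. Qed.

Definition apex_edge (t : {set V}) (x y : V) : bool :=
  [&& x != y, x \in t, y \in t & (apex t == x) || (apex t == y)].

Definition apex_graph : rel V := [rel x y | [exists t in F, apex_edge t x y]].

Lemma apex_edge_private t x y : t \in F -> apex_edge t x y -> private_pair F t x y.
Proof.
move=> tF /and4P[xy xt yt /orP[] /eqP apex_t].
  by rewrite -apex_t apex_private // apex_t eq_sym.
by rewrite private_pairC -apex_t apex_private // apex_t.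
Qed.

Lemma apex_graph_sym : symmetric apex_graph.
Proof.
move=> x y; apply: eq_existsb_in => t _.
rewrite /apex_edge [x == y]eq_sym [(apex t == x) || _]orbC.
by case: (x \in t); case: (y \in t); rewrite ?andbF.
Qed.

Lemma apex_graph_sum x y : (apex_graph x y : nat) = \sum_(t in F) (apex_edge t x y : nat).
Proof.
have [/exists_inP[t tF e_t] | /exists_inPn no_t] := boolP (apex_graph x y); last first.
  by rewrite big1 // => t tF; rewrite (negbTE (no_t t tF)).
rewrite (bigD1 t) //= e_t big1 // => t' /andP[t'F t't].
apply/eqP; rewrite eqb0; apply: contraNN t't => /and4P[_ xt' yt' _].
by apply/eqP/(private_pairP (apex_edge_private tF e_t)).
Qed.

Lemma sum_deg_apex_graph : \sum_x deg apex_graph x = 4 * #|F|.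
Proof.
rewrite /deg; under eq_bigr do under eq_bigr do rewrite apex_graph_sum.
under eq_bigr do rewrite exchange_big.
rewrite exchange_big mulnC -sum_nat_const; apply: eq_bigr => t tF.
have card_t := triF tF; rewrite (cardsD1 (apex t)) apex_in // add1n in card_t.
by rewrite sum_pairs_through ?apex_in //; case: card_t => ->.
Qed.

Lemma apex_graph_owner x y : apex_graph x y ->
  exists2 t, t \in F & [/\ x \in t, y \in t, private_pair F t x y & apex_edge t x y].
Proof.
case/exists_inP => t tF e_t; exists t => //.
by case/and4P: (e_t) => _ xt yt _; split; rewrite ?apex_edge_private.
Qed.

(* Owners of the three edges are distinct (else all three coincide, and the apex of that
   single triangle would lie on all three edges), so they form a rainbow triangle. *)
Lemma apex_graph_triangle_free x y z :
  apex_graph x y -> apex_graph y z -> apex_graph x z -> False.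
Proof.
move=> /apex_graph_owner[t1 t1F [x1 y1 p1 e1]] /apex_graph_owner[t2 t2F [y2 z2 p2 e2]].
move=> /apex_graph_owner[t3 t3F [x3 z3 p3 e3]].
have all_eq : t1 = t2 -> t2 = t3 -> False.
  move=> t12 t23; subst t2 t3; move: e1 e2 e3.
  by do 3!case/and4P=> /eqP ? _ _ /orP[] /eqP ?; congruence.
have [t12 | t12] := eqVneq t1 t2.
  by apply: all_eq => //; apply: (private_pairP p3 t2F); rewrite // -t12.
have [t23 | t23] := eqVneq t2 t3.
  by apply: all_eq => //; apply/esym/(private_pairP p1 t2F); rewrite // t23.
have [t13 | t13] := eqVneq t1 t3.
  by case/eqP: t12; apply: (private_pairP p2 t1F); rewrite // t13.
apply: no_rainbow; apply: (@has_rainbowI _ _ x y z t1 t2 t3) => //.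
- by case/and4P: e1.
- by case/and4P: e2.
- by case/and4P: e3.
Qed.

Section Bipartite.
Variable A : {set V}.
Hypothesis apex_graphE : forall x y, apex_graph x y = ((x \in A) != (y \in A)).

Lemma cross_private_pair x y : (x \in A) != (y \in A) ->
  exists2 t, t \in F & [/\ x \in t, y \in t & private_pair F t x y].
Proof. by rewrite -apex_graphE => /apex_graph_owner[t tF [xt yt pt _]]; exists t. Qed.

Lemma apex_opposite t a : t \in F -> a \in t -> a != apex t -> (a \in A) = ~~ (apex t \in A).
Proof.
move=> tF at_ a_apex; apply/negbRL/addbP; rewrite -negb_eqb -apex_graphE.
by apply/exists_inP; exists t; rewrite // /apex_edge a_apex at_ apex_in // eqxx orbT.
Qed.

Lemma base_same_side t a c : t \in F -> a \in t -> c \in t -> a != apex t -> c != apex t ->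
  (a \in A) = (c \in A).
Proof.
by move=> tF at_ ct a_apex c_apex; rewrite (apex_opposite tF at_) ?(apex_opposite tF ct).
Qed.

Lemma triangle_base t : t \in F -> exists a c,
  [/\ a != c, a != apex t, c != apex t & t = apex t |: [set a; c]].
Proof. by move=> tF; apply: triangle_through (triF tF) (apex_in tF). Qed.

(* w is joined in the apex graph to both base vertices a and c; if the owners of these two
   edges differed, they would form a rainbow triangle on a, c, w together with t. *)
Lemma triangle_over_base t a c w : t \in F -> t = apex t |: [set a; c] ->
  a != c -> a != apex t -> c != apex t -> (w \in A) != (a \in A) -> w |: [set a; c] \in F.
Proof.
move=> tF t_eq ac a_apex c_apex w_side.
have [at_ ct] : a \in t /\ c \in t by rewrite t_eq !inE !eqxx !orbT.
have [<- | w_apex] := eqVneq (apex t) w; first by rewrite -t_eq.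
have wa : w != a by apply: contraNneq w_side => ->.
have wc : w != c by apply: contraNneq w_side => ->; rewrite (base_same_side tF at_ ct).
have wt : w \notin t by rewrite t_eq !inE negb_or eq_sym w_apex negb_or wa wc.
have [s1 s1F [w1 a1 _]] := cross_private_pair w_side.
have [s2 s2F [w2 c2 _]] : exists2 s, s \in F & [/\ w \in s, c \in s & private_pair F s w c].
  by apply: cross_private_pair; rewrite -(base_same_side tF at_ ct).
have [s12 | s12] := eqVneq s1 s2.
  rewrite -s12 in c2.
  by rewrite -(triangle_eq (triF s1F) a1 c2 w1) // eq_sym.
case: no_rainbow; apply: (@has_rainbowI _ _ w a c s1 t s2) => //.
- by apply: contraNneq wt => <-.
- by apply: contraNneq wt => ->.
Qed.

(* If two apices were on different sides, the triangles over the two bases completed by a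
   vertex of the other base would both own the pair of these two vertices. *)
Lemma apex_same_side t1 t2 : t1 \in F -> t2 \in F -> (apex t1 \in A) = (apex t2 \in A).
Proof.
move=> t1F t2F; apply/eqP; apply: contraT => sides.
have [a1 [c1 [ac1 a1_apex c1_apex t1_eq]]] := triangle_base t1F.
have [a2 [c2 [ac2 a2_apex c2_apex t2_eq]]] := triangle_base t2F.
have [a1t c1t] : a1 \in t1 /\ c1 \in t1 by rewrite t1_eq !inE !eqxx !orbT.
have [a2t c2t] : a2 \in t2 /\ c2 \in t2 by rewrite t2_eq !inE !eqxx !orbT.
have c1_side := base_same_side t1F a1t c1t a1_apex c1_apex.
have c2_side := base_same_side t2F a2t c2t a2_apex c2_apex.
have a12 : (a2 \in A) != (a1 \in A).
  by rewrite (apex_opposite t1F a1t) 1?(apex_opposite t2F a2t) // (inj_eq negb_inj) eq_sym.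
have a21 : (a1 \in A) != (a2 \in A) by rewrite eq_sym.
have F1 := triangle_over_base t1F t1_eq ac1 a1_apex c1_apex a12.
have F2 := triangle_over_base t2F t2_eq ac2 a2_apex c2_apex a21.
have [s sF [a1s a2s ps]] := cross_private_pair a21.
have same : a2 |: [set a1; c1] = a1 |: [set a2; c2].
  by rewrite (private_pairP ps F1) 1?(private_pairP ps F2) // !inE !eqxx ?orbT.
have : c1 \in a1 |: [set a2; c2] by rewrite -same !inE eqxx !orbT.
case/mem_set3 => c1_eq.
- by rewrite c1_eq eqxx in ac1.
- by move: a12; rewrite c1_side c1_eq eqxx.
- by move: a12; rewrite c1_side c2_side c1_eq eqxx.
Qed.

Definition bases : {set {set V}} := [set t :\ apex t | t in F].

Section ApexSide.
Variable t0 : {set V}.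
Hypothesis t0F : t0 \in F.

Definition apex_side : {set V} := [set x | (x \in A) == (apex t0 \in A)].

Lemma apex_side_eq : apex_side = A \/ apex_side = ~: A.
Proof.
rewrite /apex_side; case: (apex t0 \in A); [left | right].
  by apply/setP => x; rewrite !inE eqb_id.
by apply/setP => x; rewrite !inE eqbF_neg.
Qed.

Lemma apex_in_side t : t \in F -> apex t \in apex_side.
Proof. by move=> tF; rewrite inE (apex_same_side tF t0F). Qed.

Lemma basesP e : e \in bases -> exists t a c,
  [/\ t \in F, a != c, a != apex t, c != apex t & e = [set a; c] /\ t = apex t |: e].
Proof.
case/imsetP => t tF ->; have [a [c [ac a_apex c_apex t_eq]]] := triangle_base tF.
exists t, a, c; split=> //; split; last by rewrite setD1K ?apex_in.
by rewrite {1}t_eq setU1K // !inE negb_or !(eq_sym (apex t)) a_apex c_apex.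
Qed.

Lemma base_off_side e x : e \in bases -> x \in e -> x \notin apex_side.
Proof.
case/basesP => t [a [c [tF _ a_apex c_apex [-> t_eq]]]].
have [at_ ct] : a \in t /\ c \in t by rewrite t_eq !inE !eqxx !orbT.
rewrite /apex_side !inE -(apex_same_side tF t0F) => /orP[] /eqP->.
- by rewrite (apex_opposite tF at_ a_apex); case: (apex t \in A).
- by rewrite (apex_opposite tF ct c_apex); case: (apex t \in A).
Qed.

Lemma cone_in_family e r : e \in bases -> r \in apex_side -> r |: e \in F.
Proof.
case/basesP => t [a [c [tF ac a_apex c_apex [e_ac t_eq]]]] r_side; rewrite e_ac.
apply: (triangle_over_base tF _ ac a_apex c_apex); first by rewrite -e_ac.
have at_ : a \in t by rewrite t_eq e_ac !inE eqxx orbT.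
move: r_side; rewrite inE (apex_opposite tF at_ a_apex) -(apex_same_side tF t0F).
by move/eqP->; case: (apex t \in A).
Qed.

(* Both r0 |: e and r0 |: e' contain the pair {x, r0}, which crosses the bipartition. *)
Lemma bases_disjoint e e' x : e \in bases -> e' \in bases -> x \in e -> x \in e' -> e = e'.
Proof.
move=> eB e'B xe xe'; have r0_side := apex_in_side t0F.
have x_side : (x \in A) != (apex t0 \in A) by move: (base_off_side eB xe); rewrite inE.
have [s _ [_ _ ps]] := cross_private_pair x_side.
have own f : f \in bases -> x \in f -> apex t0 |: f = s.
  move=> fB xf; apply: (private_pairP ps (cone_in_family fB r0_side)).
  - by rewrite in_setU1 xf orbT.
  - exact: setU11.
have r0_off f : f \in bases -> apex t0 \notin f.
  by move=> fB; apply: contraL r0_side; apply: base_off_side.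
by rewrite -(setU1K (r0_off e eB)) -(setU1K (r0_off e' e'B)) !own.
Qed.

Lemma bases_matching_outside : matching_outside bases apex_side.
Proof.
split; [|exact: base_off_side | exact: bases_disjoint].
by move=> e /basesP[t [a [c [_ ac _ _ [-> _]]]]]; rewrite cards2 ac.
Qed.

Lemma family_eq_cone : F = cone_family bases apex_side.
Proof.
apply/setP => t; apply/idP/cone_familyP => [tF | [e eB [r r_side ->]]].
  exists (t :\ apex t); first exact: imset_f.
  by exists (apex t); rewrite ?apex_in_side // setD1K ?apex_in.
exact: cone_in_family.
Qed.

End ApexSide.
End Bipartite.
End NoRainbow.

Lemma extremal_family_is_cone (V : finType) (F : {set {set V}}) k :
  0 < k -> #|V| = 4 * k -> triangle_family F -> #|F| = 2 * k ^ 2 -> ~ has_rainbow F ->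
  exists M R, [/\ matching_outside M R, #|M| = k, #|R| = 2 * k & F = cone_family M R].
Proof.
move=> k_gt0 cardV triF cardF no_rb.
have [x0 _] : exists x0 : V, x0 \in [set: V] by apply/card_gt0P; rewrite cardsT cardV; lia.
have cardV2 : #|V| = 2 * (2 * k) by lia.
have edges : \sum_x deg (apex_graph F x0) x = 2 * (2 * k) ^ 2.
  by rewrite sum_deg_apex_graph // cardF; lia.
have [A [cardA apex_graphE]] :=
  mantel_extremal (apex_graph_sym F x0) (apex_graph_triangle_free triF no_rb) cardV2 edges.
have [t0 t0F] : exists t0, t0 \in F by apply/card_gt0P; rewrite cardF; lia.
have matchM := bases_matching_outside triF no_rb apex_graphE t0F.
have F_eq := family_eq_cone triF no_rb apex_graphE t0F.
have cardAC : #|~: A| = 2 * k by have := cardsC A; rewrite cardA cardV; lia.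
have cardR : #|apex_side F x0 A t0| = 2 * k by case: (apex_side_eq F x0 A t0) => ->.
exists (bases F x0), (apex_side F x0 A t0); split=> //.
by move: cardF; rewrite {1}F_eq card_cone_family // cardR; nia.
Qed.

Lemma relabel_cone_family (V : finType) (M : {set {set V}}) (R : {set V}) n k :
  0 < k -> n = 4 * k -> #|V| = n -> matching_outside M R -> #|M| = k -> #|R| = 2 * k ->
  exists f : 'I_n -> V, bijective f /\ [set f @: t | t : {set 'I_n} in Tstar n] = cone_family M R.
Proof.
move=> k_gt0 n4k cardV matchM cardM cardR.
have [x0 _] : exists x0 : V, x0 \in [set: V] by apply/card_gt0P; rewrite cardsT cardV; lia.
exists (relabel M R k x0); split; first exact: relabel_bij.
by rewrite Tstar_cone imset_cone_family relabel_matching ?relabel_rest.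
Qed.

Theorem theorem2p2 (n : nat) :
  0 < n -> 4 %| n ->
  [/\ triangle_family (Tstar n),
      #|Tstar n| = n ^ 2 %/ 8,
      ~ has_rainbow (Tstar n) &
      forall (V : finType) (F : {set {set V}}),
        #|V| = n -> triangle_family F -> #|F| = n ^ 2 %/ 8 ->
        ~ has_rainbow F ->
        exists f : 'I_n -> V, bijective f /\ F = [set f @: t | t : {set 'I_n} in Tstar n]].
Proof.
move=> n_gt0 /dvdnP[k n_eq]; have n4k : n = 4 * k by rewrite n_eq mulnC.
have k_gt0 : 0 < k by lia.
have -> : n ^ 2 %/ 8 = 2 * k ^ 2.
  by rewrite n4k -(mulnK (2 * k ^ 2) (_ : 0 < 8)) //; congr divn; lia.
have matchT := Tstar_matching_outside n4k.
split; rewrite ?Tstar_cone.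
- exact: cone_family_triangles.
- by rewrite card_cone_family // (card_Tstar_matching n4k) (card_Tstar_rest n4k); lia.
- exact: cone_family_no_rainbow.
move=> V F cardV triF cardF no_rb.
have [M [R [matchM cardM cardR ->]]] :=
  extremal_family_is_cone k_gt0 (etrans cardV n4k) triF cardF no_rb.
have [f [f_bij f_T]] := relabel_cone_family k_gt0 n4k cardV matchM cardM cardR.
by exists f; rewrite -Tstar_cone f_T.
Qed.
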